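(* Let $S$ be a semibounded linear relation in $\mathfrak H$ with lower bound $\gamma\in\mathbb R$, let $c\le\gamma$, and let $Q_c$ be a representing map for $\mathfrak t(S)-c$. Then: (1) $\varphi\in\mathrm{dom}\,\bar{\mathfrak t}(S)$ if and only if there is a sequence $\{\varphi_n,\varphi_n'\}\in S$ with $\varphi_n\to\varphi$ and $(\varphi_n'-\varphi_m',\varphi_n-\varphi_m)\to0$ as $n,m\to\infty$. (2) $\varphi\in\ker(\bar{\mathfrak t}(S)-c)$, i.e. $\varphi\in\mathrm{dom}\,\bar{\mathfrak t}(S)$ with $\bar{\mathfrak t}(S)[\varphi,\varphi]=c\|\varphi\|^2$, if and only if there is a sequence $\{\varphi_n,\varphi_n'\}\in S$ with $\varphi_n\to\varphi$ and $(\varphi_n'-c\varphi_n,\varphi_n)\to0$. (3) $\varphi\in\mathrm{ran}\,Q_c^*$ if and only if there exists $C_\varphi<\infty$ such that $|(\psi,\varphi)|^2\le C_\varphi(\psi',\psi)$ for all $\{\psi,\psi'\}\in S-c$.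
   Context: Linear relations are linear subspaces $T\subset\mathfrak H\times\mathfrak K$; $\mathrm{dom}$, $\mathrm{ran}$ as usual, $T^*=\{\{h,k\}\in\mathfrak K\times\mathfrak H:(k,f)=(h,g)\ \forall\{f,g\}\in T\}$, and $S-c=\{\{f,g-cf\}:\{f,g\}\in S\}$. A relation $S$ in $\mathfrak H$ is semibounded with lower bound $\gamma$ if $\gamma$ is the supremum of all $c$ with $(\varphi',\varphi)\ge c\|\varphi\|^2$ for all $\{\varphi,\varphi'\}\in S$. The form $\mathfrak t(S)[\varphi,\psi]=(\varphi',\psi)$, $\{\varphi,\varphi'\},\{\psi,\psi'\}\in S$, domain $\mathrm{dom}\,S$; it is closable and $\bar{\mathfrak t}(S)$ denotes its closure. A representing map for $\mathfrak t(S)-c$ is a linear operator $Q_c$ from $\mathfrak H$ to a Hilbert space $\mathfrak K_c$ with $\mathrm{dom}\,Q_c=\mathrm{dom}\,S$ and $\mathfrak t(S)[\varphi,\psi]=c(\varphi,\psi)+(Q_c\varphi,Q_c\psi)$; $Q_c^*\subset\mathfrak K_c\times\mathfrak H$ is its adjoint relation. *)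

From HB Require Import structures.
From mathcomp Require Import all_boot all_order all_algebra.
From mathcomp Require Import complex.
From mathcomp Require Import boolp classical_sets reals topology normedtype sequences.
Set Implicit Arguments. Unset Strict Implicit. Unset Printing Implicit Defensive.
Import Order.TTheory GRing.Theory Num.Theory numFieldNormedType.Exports.
Local Open Scope classical_set_scope.
Local Open Scope ring_scope.
Local Open Scope complex_scope.

Section Hilbert.
Variable R : realType.
Local Notation C := R[i].

(* modulus of a complex number, as a real: Re |z| (|z| = (normc z)%:C) *)
Definition cmod (z : C) : R := complex.Re `|z|.

Section Space.
Variable V : lmodType C.
Variable ip : V -> V -> C.   (* (x, y): linear in x, antilinear in y *)

Definition hnorm (x : V) : R := Num.sqrt (complex.Re (ip x x)).

Definition hconverges (u : nat -> V) (x : V) : Prop :=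
  (fun n => hnorm (u n - x)) @ \oo --> (0 : R).

Definition hcauchy (u : nat -> V) : Prop :=
  forall e : R, 0 < e -> exists N : nat,
    forall n m : nat, (N <= n)%N -> (N <= m)%N -> hnorm (u n - u m) < e.

Definition is_hilbert : Prop :=
  [/\ (forall (a : C) (x y z : V), ip (a *: x + y) z = a * ip x z + ip y z),
      (forall x y : V, ip x y = (ip y x)^*),
      (forall x : V, 0 <= ip x x),
      (forall x : V, ip x x = 0 -> x = 0) &
      (forall u : nat -> V, hcauchy u -> exists x, hconverges u x)].

(* a relation S in V is given by its graph, S f f' meaning {f, f'} \in S *)
Definition linrel (S : V -> V -> Prop) : Prop :=
  S 0 0 /\ forall (a : C) f f' g g', S f f' -> S g g' ->
                                      S (a *: f + g) (a *: f' + g').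

Definition rdom (S : V -> V -> Prop) (f : V) : Prop := exists f', S f f'.

Definition lower_bound_prop (S : V -> V -> Prop) (c : R) : Prop :=
  forall f f', S f f' -> (c * hnorm f ^+ 2)%:C <= ip f' f.

Definition semibounded_lb (S : V -> V -> Prop) (gamma : R) : Prop :=
  lower_bound_prop S gamma /\
  forall c : R, lower_bound_prop S c -> c <= gamma.

(* a form is a pair (D, t) of a domain D and values t x y (x, y in D) *)
Definition subspace (D : V -> Prop) : Prop :=
  D 0 /\ forall (a : C) x y, D x -> D y -> D (a *: x + y).

Definition sesq_form (D : V -> Prop) (t : V -> V -> C) : Prop :=
  [/\ subspace D,
      (forall (a : C) x y z, D x -> D y -> D z ->
          t (a *: x + y) z = a * t x z + t y z) &
      (forall (a : C) x y z, D x -> D y -> D z ->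
          t z (a *: x + y) = a^* * t z x + t z y)].

Definition semibounded_form (D : V -> Prop) (t : V -> V -> C) : Prop :=
  exists m : R, forall x, D x -> (m * hnorm x ^+ 2)%:C <= t x x.

Definition form_cauchy (t : V -> V -> C) (u : nat -> V) : Prop :=
  forall e : R, 0 < e -> exists N : nat,
    forall n m : nat, (N <= n)%N -> (N <= m)%N ->
      cmod (t (u n - u m) (u n - u m)) < e.

Definition closed_form (D : V -> Prop) (t : V -> V -> C) : Prop :=
  forall (u : nat -> V) (x : V), (forall n, D (u n)) -> hconverges u x ->
    form_cauchy t u ->
    D x /\ (fun n => cmod (t (u n - x) (u n - x))) @ \oo --> (0 : R).

Definition form_ext (D1 : V -> Prop) (t1 : V -> V -> C)
    (D2 : V -> Prop) (t2 : V -> V -> C) : Prop :=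
  (forall x, D1 x -> D2 x) /\
  (forall x y, D1 x -> D1 y -> t1 x y = t2 x y).

(* (D, t) extends the form t(S)[f, g] = (f', g), dom t(S) = dom S *)
Definition extends_tS (S : V -> V -> Prop) (D : V -> Prop) (t : V -> V -> C)
  : Prop :=
  (forall x, rdom S x -> D x) /\
  (forall f f' g, S f f' -> rdom S g -> t f g = ip f' g).

Definition is_closure_tS (S : V -> V -> Prop) (Db : V -> Prop)
    (tb : V -> V -> C) : Prop :=
  [/\ sesq_form Db tb, semibounded_form Db tb, closed_form Db tb,
      extends_tS S Db tb &
      forall (D' : V -> Prop) (t' : V -> V -> C),
        sesq_form D' t' -> semibounded_form D' t' -> closed_form D' t' ->
        extends_tS S D' t' -> form_ext Db tb D' t'].
End Space.

Definition representing_map (V W : lmodType C) (ip : V -> V -> C)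
    (ipW : W -> W -> C) (S : V -> V -> Prop) (c : R) (Q : V -> W) : Prop :=
  (forall (a : C) x y, rdom S x -> rdom S y -> Q (a *: x + y) = a *: Q x + Q y)
  /\ (forall f f' g, S f f' -> rdom S g ->
        ip f' g = c%:C * ip f g + ipW (Q f) (Q g)).

(* k \in ran Q^*, Q^* = {{h, k} in W x V : (k, f) = (h, Q f) for all f in dom Q} *)
Definition in_ran_adj (V W : lmodType C) (ip : V -> V -> C)
    (ipW : W -> W -> C) (D : V -> Prop) (Q : V -> W) (k : V) : Prop :=
  exists h : W, forall f, D f -> ip k f = ipW h (Q f).

End Hilbert.

From HB Require Import structures.
From mathcomp Require Import all_boot all_order all_algebra interval_inference.
From mathcomp Require Import complex.
From mathcomp Require Import boolp classical_sets reals topology normedtype sequences.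
From mathcomp Require Import ring lra.
Import Order.TTheory GRing.Theory Num.Theory numFieldNormedType.Exports.
Local Open Scope classical_set_scope.
Local Open Scope ring_scope.
Local Open Scope complex_scope.
Set Implicit Arguments.
Unset Strict Implicit.
Unset Printing Implicit Defensive.

(* Since t(S)[f] = c |f|^2 + |Q f|^2 on dom S, a sequence in dom S is Cauchy
   for t(S) exactly when it and its image under Q are Cauchy.  Hence the closure
   of t(S) is a restriction of the closed form c (f, g) + (Qbar f, Qbar g) on
   dom Qbar, where Qbar is the closure of Q.  This gives (1), and (2) because
   (f' - c f, f) = |Q f|^2 identifies ker (tbar(S) - c) with ker Qbar.
   In (3), "only if" is Cauchy-Schwarz.  Conversely, the bound makes
   f |-> |Q f|^2 - 2 Re (f, phi) bounded below on dom S; along a minimizing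
   sequence Q f_n is Cauchy by the parallelogram law, and the first variation
   at its limit h gives (Q g, h) = (g, phi) for g in dom S, i.e. phi = Q^* h. *)

(* A bare [Re] would be the [R[i]]-valued real part of [numClosedFieldType]. *)
Local Notation Re := complex.Re.
Local Notation Im := complex.Im.

Definition eventually_pairs (P : nat -> nat -> Prop) : Prop :=
  exists N, forall n m, (N <= n)%N -> (N <= m)%N -> P n m.

Lemma near_pairs (P : nat -> Prop) :
  (\forall n \near \oo, P n) -> eventually_pairs (fun n m => P n /\ P m).
Proof. by move=> [N _ hN]; exists N => n m /hN Pn /hN. Qed.

Lemma eventually_pairsI (P1 P2 : nat -> nat -> Prop) :
  eventually_pairs P1 -> eventually_pairs P2 ->
  eventually_pairs (fun n m => P1 n m /\ P2 n m).
Proof.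
move=> [N1 h1] [N2 h2]; exists (maxn N1 N2) => n m.
by rewrite !geq_max => /andP[n1 n2] /andP[m1 m2]; split; [exact: h1|exact: h2].
Qed.

Lemma eventually_pairsS (P1 P2 : nat -> nat -> Prop) :
  (forall n m, P1 n m -> P2 n m) -> eventually_pairs P1 -> eventually_pairs P2.
Proof. by move=> P12 [N hN]; exists N => n m hn hm; apply/P12/hN. Qed.

Section ComplexModulus.
Variable R : realType.
Local Notation C := R[i].

Definition normc2 (z : C) : R := Re z ^+ 2 + Im z ^+ 2.

Lemma normc2_ge0 z : 0 <= normc2 z.
Proof. by rewrite addr_ge0 ?sqr_ge0. Qed.

Lemma normc2_eq0 z : normc2 z = 0 -> z = 0.
Proof.
case: z => a b; rewrite /normc2 /= => h.
have a0 : a = 0 by nra.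
have b0 : b = 0 by nra.
by rewrite a0 b0.
Qed.

Lemma normc2M a b : normc2 (a * b) = normc2 a * normc2 b.
Proof. by case: a => ? ?; case: b => ? ?; rewrite /normc2 /=; ring. Qed.

Lemma normc2N z : normc2 (- z) = normc2 z.
Proof. by case: z => ? ?; rewrite /normc2 /=; ring. Qed.

Lemma normc2J z : normc2 z^* = normc2 z.
Proof. by case: z => ? ?; rewrite /normc2 /=; ring. Qed.

Lemma normc2D_le a b : normc2 (a + b) <= 2 * normc2 a + 2 * normc2 b.
Proof.
case: a => a1 a2; case: b => b1 b2; rewrite /normc2 /=.
by have := sqr_ge0 (a1 - b1); have := sqr_ge0 (a2 - b2); nra.
Qed.

Lemma sqr_Re_le_normc2 z : Re z ^+ 2 <= normc2 z.
Proof. by rewrite lerDl sqr_ge0. Qed.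

Lemma ReD (a b : C) : Re (a + b) = Re a + Re b.
Proof. by case: a => ? ?; case: b. Qed.

Lemma ReB (a b : C) : Re (a - b) = Re a - Re b.
Proof. by case: a => ? ?; case: b. Qed.

Lemma Re_realM (s : R) (z : C) : Re (s%:C * z) = s * Re z.
Proof. by case: z => a b /=; ring. Qed.

Lemma cmod_real (r : R) : cmod r%:C = `|r|.
Proof. by rewrite /cmod normc_def /= expr0n /= addr0 sqrtr_sqr. Qed.

(* Take [t = - s a^*] with [s = 1 / (q + 1)]. *)
Lemma linear_term_eq0 (q : R) (a : C) : 0 <= q ->
  (forall t : C, 0 <= normc2 t * q + 2 * Re (t * a)) -> a = 0.
Proof.
move=> q0 h; apply: normc2_eq0; set s := (q + 1)^-1.
have s0 : 0 < s by rewrite invr_gt0; lra.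
have := h (- s%:C * a^*); rewrite normc2M normc2N normc2J.
have -> : Re (- s%:C * a^* * a) = - (s * normc2 a).
  by rewrite /normc2; case: (a) => a1 a2 /=; ring.
have -> : normc2 s%:C = s ^+ 2 by rewrite /normc2 /= expr0n /= addr0.
have sq : s * q < 1 by rewrite /s mulrC ltr_pdivrMr; lra.
move=> hs; apply/le_anti; rewrite normc2_ge0 andbT.
have m0 := normc2_ge0 a; set m := normc2 a in hs m0 *.
have : 0 <= s * m * (1 - s * q) by apply: mulr_ge0; [exact: mulr_ge0 (ltW s0) m0|lra].
nra.
Qed.

Lemma Re_mul_gtN (t z : C) (e : R) : 0 < e ->
  normc2 z < e ^+ 2 / (normc2 t + 1) -> - e < Re (t * z).
Proof.
move=> e0 hz; have t0 := normc2_ge0 t; have z0 := normc2_ge0 z.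
have {}hz : normc2 z * (normc2 t + 1) < e ^+ 2 by rewrite -ltr_pdivlMr //; lra.
have : Re (t * z) ^+ 2 < e ^+ 2.
  by apply: le_lt_trans (sqr_Re_le_normc2 _) _; rewrite normc2M; nra.
by nra.
Qed.

Definition cconverges (z : nat -> C) (l : C) : Prop :=
  forall e : R, 0 < e -> \forall n \near \oo, normc2 (z n - l) < e.

Lemma cconverges_unique z l1 l2 : cconverges z l1 -> cconverges z l2 -> l1 = l2.
Proof.
move=> h1 h2; apply/eqP; rewrite -subr_eq0; apply/eqP/normc2_eq0/le_anti.
rewrite normc2_ge0 andbT; apply/ler_addgt0Pr => e e0; rewrite add0r.
have e4 : 0 < e / 4 by lra.
have [n [k1 k2]] := filter_ex (filterI (h1 _ e4) (h2 _ e4)).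
have := normc2D_le (l1 - z n) (z n - l2); rewrite addrA subrK.
by rewrite -normc2N opprB in k1; lra.
Qed.

Lemma cconverges_cst l : cconverges (fun=> l) l.
Proof. by move=> e e0; apply: nearW => n; rewrite subrr /normc2 /= expr0n /= addr0. Qed.

Lemma cconvergesJ z l : cconverges z l -> cconverges (fun n => (z n)^*) l^*.
Proof. by move=> h e /h; apply: filterS => n; rewrite -rmorphB normc2J. Qed.

Lemma cconvergesD z1 z2 l1 l2 (k : C) : cconverges z1 l1 -> cconverges z2 l2 ->
  cconverges (fun n => z1 n + k * z2 n) (l1 + k * l2).
Proof.
move=> h1 h2 e e0; have k0 := normc2_ge0 k.
have e1 : 0 < e / 4 by lra.
have e2 : 0 < e / 4 / (normc2 k + 1) by rewrite divr_gt0 //; lra.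
apply: filterS2 (h1 _ e1) (h2 _ e2) => n k1 k2.
have -> : z1 n + k * z2 n - (l1 + k * l2) = (z1 n - l1) + k * (z2 n - l2) by ring.
have := normc2D_le (z1 n - l1) (k * (z2 n - l2)); rewrite normc2M.
have : normc2 (z2 n - l2) * (normc2 k + 1) < e / 4 by rewrite -ltr_pdivlMr //; lra.
have := normc2_ge0 (z2 n - l2); nra.
Qed.

End ComplexModulus.

Section InnerProduct.
Variable R : realType.
Local Notation C := R[i].
Variables (V : lmodType C) (ip : V -> V -> C).
Hypothesis hilbertV : is_hilbert ip.

Lemma ipDl x y z : ip (x + y) z = ip x z + ip y z.
Proof. by case: hilbertV => linl _ _ _ _; rewrite -[x in LHS]scale1r linl mul1r. Qed.

Lemma ip0l z : ip 0 z = 0.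
Proof. by apply: (@addrI _ (ip 0 z)); rewrite -ipDl !addr0. Qed.

Lemma ipZl a x z : ip (a *: x) z = a * ip x z.
Proof. by case: hilbertV => linl _ _ _ _; rewrite -[_ *: x]addr0 linl ip0l addr0. Qed.

Lemma ipNl x z : ip (- x) z = - ip x z.
Proof. by rewrite -scaleN1r ipZl mulN1r. Qed.

Lemma ipBl x y z : ip (x - y) z = ip x z - ip y z.
Proof. by rewrite ipDl ipNl. Qed.

Lemma ipJ x y : (ip x y)^* = ip y x.
Proof. by case: hilbertV => _ herm _ _ _; rewrite herm conjcK. Qed.

Lemma ipDr x y z : ip z (x + y) = ip z x + ip z y.
Proof. by rewrite -ipJ ipDl rmorphD /= !ipJ. Qed.

Lemma ipZr a x z : ip z (a *: x) = a^* * ip z x.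
Proof. by rewrite -ipJ ipZl rmorphM /= ipJ. Qed.

Lemma ip0r z : ip z 0 = 0.
Proof. by rewrite -ipJ ip0l rmorph0. Qed.

Lemma ipNr x z : ip z (- x) = - ip z x.
Proof. by rewrite -ipJ ipNl rmorphN /= ipJ. Qed.

Definition sqnorm (x : V) : R := Re (ip x x).

Lemma ip_sqnorm x : ip x x = (sqnorm x)%:C.
Proof.
case: hilbertV => _ _ pos _ _; rewrite /sqnorm.
by move: (ger0_Im (pos x)); case: (ip x x) => a b /= ->.
Qed.

Lemma sqr_hnorm x : hnorm ip x ^+ 2 = sqnorm x.
Proof.
case: hilbertV => _ _ pos _ _.
by rewrite sqr_sqrtr //; move: (pos x); rewrite lecE => /andP[].
Qed.

Lemma sqnorm_ge0 x : 0 <= sqnorm x.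
Proof. by rewrite -sqr_hnorm sqr_ge0. Qed.

Lemma sqnorm_eq0 x : sqnorm x = 0 -> x = 0.
Proof. by case: hilbertV => _ _ _ definite _ h; apply: definite; rewrite ip_sqnorm h. Qed.

Lemma sqnorm0 : sqnorm 0 = 0.
Proof. by rewrite /sqnorm ip0l. Qed.

Lemma sqnormD x y : sqnorm (x + y) = sqnorm x + sqnorm y + 2 * Re (ip x y).
Proof.
rewrite /sqnorm ipDl !ipDr -(ipJ x y).
by case: (ip x x) => ? ?; case: (ip y y) => ? ?; case: (ip x y) => ? ? /=; ring.
Qed.

Lemma sqnormZ a x : sqnorm (a *: x) = normc2 a * sqnorm x.
Proof. by rewrite /sqnorm ipZl ipZr ip_sqnorm /normc2; case: a => ? ? /=; ring. Qed.

Lemma sqnormN x : sqnorm (- x) = sqnorm x.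
Proof. by rewrite /sqnorm ipNl ipNr opprK. Qed.

Lemma sqnormB x y : sqnorm (x - y) = sqnorm x + sqnorm y - 2 * Re (ip x y).
Proof. by rewrite sqnormD sqnormN ipNr; case: (ip x y) => ? ? /=; ring. Qed.

Lemma sqnormD_le x y : sqnorm (x + y) <= 2 * sqnorm x + 2 * sqnorm y.
Proof. by have := sqnorm_ge0 (x - y); rewrite sqnormB sqnormD; lra. Qed.

Lemma sqnorm_sym x y : sqnorm (x - y) = sqnorm (y - x).
Proof. by rewrite -sqnormN opprB. Qed.

Lemma sqnorm_split x y z : sqnorm (x - y) <= 2 * sqnorm (x - z) + 2 * sqnorm (z - y).
Proof. by have := sqnormD_le (x - z) (z - y); rewrite addrA subrK. Qed.

(* Cauchy-Schwarz, from [0 <= sqnorm (x - l y)] with [l = ip x y / sqnorm y]. *)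
Lemma normc2_ip_le x y : normc2 (ip x y) <= sqnorm x * sqnorm y.
Proof.
have [y0|ny0] := eqVneq (sqnorm y) 0.
  by rewrite y0 mulr0 (sqnorm_eq0 y0) ip0r /normc2 /= expr0n /= addr0.
have yp : 0 < sqnorm y by rewrite lt_def ny0 sqnorm_ge0.
have := sqnorm_ge0 (x - ((sqnorm y)^-1%:C * ip x y) *: y).
rewrite sqnormB sqnormZ ipZr normc2M /normc2; case: (ip x y) => a b /=.
set s := sqnorm y => h.
have : 0 <= (sqnorm x * s - (a ^+ 2 + b ^+ 2)) / s by move: h; congr (0 <= _); field.
by rewrite pmulr_lge0 ?invr_gt0 // subr_ge0.
Qed.

Lemma hnorm_lt x e : 0 < e -> (hnorm ip x < e) = (sqnorm x < e ^+ 2).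
Proof.
by move=> e0; rewrite -[in LHS](ger0_norm (ltW e0)) -sqrtr_sqr ltr_sqrt ?exprn_gt0.
Qed.

Definition converges (u : nat -> V) (x : V) : Prop :=
  forall e : R, 0 < e -> \forall n \near \oo, sqnorm (u n - x) < e.

Definition cauchy_seq (u : nat -> V) : Prop :=
  forall e : R, 0 < e -> eventually_pairs (fun n m => sqnorm (u n - u m) < e).

Lemma hconvergesE u x : hconverges ip u x <-> converges u x.
Proof.
rewrite /hconverges cvgr0Pnorm_lt; split=> h e e0.
  have se : 0 < Num.sqrt e by rewrite sqrtr_gt0.
  apply: filterS (h _ se) => n.
  by rewrite ger0_norm ?sqrtr_ge0 // hnorm_lt // sqr_sqrtr ?ltW.
apply: filterS (h _ (exprn_gt0 2 e0)) => n.
by rewrite ger0_norm ?sqrtr_ge0 // hnorm_lt.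
Qed.

Lemma cauchy_seq_converges u : cauchy_seq u -> exists x, converges u x.
Proof.
case: hilbertV => _ _ _ _ complete cu.
have [x /hconvergesE] : exists x, hconverges ip u x.
  apply: complete => e e0; have [N hN] := cu _ (exprn_gt0 2 e0).
  by exists N => n m hn hm; rewrite hnorm_lt //; apply: hN.
by exists x.
Qed.

Lemma converges_cauchy_seq u x : converges u x -> cauchy_seq u.
Proof.
move=> cu e e0; have e4 : 0 < e / 4 by lra.
have [N hN] := near_pairs (cu _ e4).
exists N => n m hn hm; have [k1 k2] := hN n m hn hm.
by have := sqnorm_split (u n) (u m) x; rewrite (sqnorm_sym x); lra.
Qed.

Lemma converges_cst x : converges (fun=> x) x.
Proof. by move=> e e0; apply: nearW => n; rewrite subrr sqnorm0. Qed.

Lemma converges_comb a u v x y : converges u x -> converges v y ->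
  converges (fun n => a *: u n + v n) (a *: x + y).
Proof.
move=> hu hv e e0; have a0 := normc2_ge0 a.
have e1 : 0 < e / 4 / (normc2 a + 1) by rewrite divr_gt0 //; lra.
have e2 : 0 < e / 4 by lra.
apply: filterS2 (hu _ e1) (hv _ e2) => n k1 k2.
have -> : a *: u n + v n - (a *: x + y) = a *: (u n - x) + (v n - y).
  by rewrite scalerBr opprD addrACA.
have := sqnormD_le (a *: (u n - x)) (v n - y); rewrite sqnormZ.
have : sqnorm (u n - x) * (normc2 a + 1) < e / 4 by rewrite -ltr_pdivlMr //; lra.
by have := sqnorm_ge0 (u n - x); nra.
Qed.

Lemma converges_sub u v x y : converges u x -> converges v y ->
  converges (fun n => u n - v n) (x - y).
Proof.
move=> hu hv e /(converges_comb (-1) hv hu); apply: filterS => n.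
by rewrite !scaleN1r (addrC (- v n)) (addrC (- y)).
Qed.

Lemma cconverges_ipl u x y : converges u x -> cconverges (fun n => ip (u n) y) (ip x y).
Proof.
move=> hu e e0; have y0 := sqnorm_ge0 y.
have e1 : 0 < e / (sqnorm y + 1) by rewrite divr_gt0 //; lra.
apply: filterS (hu _ e1) => n hn; rewrite -ipBl.
apply: le_lt_trans (normc2_ip_le _ _) _.
have : sqnorm (u n - x) * (sqnorm y + 1) < e by rewrite -ltr_pdivlMr //; lra.
by have := sqnorm_ge0 (u n - x); nra.
Qed.

Lemma cconverges_ipr u x y : converges u x -> cconverges (fun n => ip y (u n)) (ip y x).
Proof.
move=> /(cconverges_ipl y) /cconvergesJ.
by under eq_fun do rewrite ipJ; rewrite ipJ.
Qed.
End InnerProduct.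

Lemma normr_affine_lt (R : realFieldType) (k a b e : R) : 0 <= a -> 0 <= b ->
  a < e / 2 / (`|k| + 1) -> b < e / 2 -> `|k * a + b| < e.
Proof.
move=> a0 b0 ha hb; have k0 := normr_ge0 k.
have {}ha : a * (`|k| + 1) < e / 2 by rewrite -ltr_pdivlMr //; lra.
apply: le_lt_trans (ler_normD _ _) _; rewrite normrM (ger0_norm a0) (ger0_norm b0); nra.
Qed.

Lemma lt_of_normr_normr_affine_lt (R : realFieldType) (k a b e : R) : 0 <= a -> 0 <= b ->
  `|k * a + b| < e / 2 -> a < e / 2 / (`|k| + 1) -> b < e.
Proof.
move=> a0 b0 hab ha; have k0 := normr_ge0 k.
have {}ha : a * (`|k| + 1) < e / 2 by rewrite -ltr_pdivlMr //; lra.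
have : `|k * a| <= `|k| * a by rewrite normrM (ger0_norm a0).
have := ler_normB (k * a + b) (k * a); rewrite addrC addKr (ger0_norm b0); nra.
Qed.

Lemma minimizing_seq (R : realType) (T : Type) (P : T -> Prop) (f : T -> R) (m : R) :
  (exists x, P x) -> (forall x, P x -> m <= f x) ->
  exists (d : R) (F : nat -> T), [/\ forall x, P x -> d <= f x,
    forall k, P (F k) & forall k, f (F k) < d + k.+1%:R^-1].
Proof.
move=> [x0 Px0] fm; pose E := [set f x | x in P].
have infE : has_inf E by split; [exists (f x0), x0|exists m => _ [x Px <-]; apply: fm].
have approx k : exists x, P x /\ f x < inf E + k.+1%:R^-1.
  have kp : 0 < (k.+1%:R : R)^-1 by rewrite invr_gt0.
  by have [_ [x Px <-] lt] := inf_adherent kp infE; exists x.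
have [F hF] := choice approx; exists (inf E), F; split=> [x Px|k|k]; last 2 first.
- by case: (hF k).
- by case: (hF k).
by apply: (ge_inf infE.2); exists x.
Qed.

Section ClosedGraph.
Variables (R : realType) (V W : lmodType R[i]).
Variables (ip : V -> V -> R[i]) (ipW : W -> W -> R[i]).
Variables (S : V -> V -> Prop) (c : R) (Q : V -> W).
Hypotheses (hilbertV : is_hilbert ip) (hilbertW : is_hilbert ipW).
Hypotheses (linS : linrel S) (reprQ : representing_map ip ipW S c Q).
Local Notation C := R[i].

Lemma S_comb a f f' g g' : S f f' -> S g g' -> S (a *: f + g) (a *: f' + g').
Proof. by case: linS => _; apply. Qed.

Lemma S_sub f f' g g' : S f f' -> S g g' -> S (f - g) (f' - g').
Proof. by move=> Sf Sg; have := S_comb (-1) Sg Sf; rewrite !scaleN1r !(addrC (- _)). Qed.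

Lemma rdom0 : rdom S 0.
Proof. by case: linS => S00 _; exists 0. Qed.

Lemma rdom_comb a x y : rdom S x -> rdom S y -> rdom S (a *: x + y).
Proof. by move=> [x' Sx] [y' Sy]; exists (a *: x' + y'); apply: S_comb. Qed.

Lemma rdom_sub x y : rdom S x -> rdom S y -> rdom S (x - y).
Proof. by move=> [x' Sx] [y' Sy]; exists (x' - y'); apply: S_sub. Qed.

Lemma Q_comb a x y : rdom S x -> rdom S y -> Q (a *: x + y) = a *: Q x + Q y.
Proof. by case: reprQ => linQ _; apply: linQ. Qed.

Lemma Q_sub x y : rdom S x -> rdom S y -> Q (x - y) = Q x - Q y.
Proof. by move=> dx dy; have := Q_comb (-1) dy dx; rewrite !scaleN1r !(addrC (- _)). Qed.

Lemma Q0 : Q 0 = 0.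
Proof.
have := Q_comb 1 rdom0 rdom0; rewrite !scale1r addr0.
by move/(congr1 (fun w => w - Q 0)); rewrite subrr addrK.
Qed.

Lemma Q_repr f f' g : S f f' -> rdom S g ->
  ip f' g = c%:C * ip f g + ipW (Q f) (Q g).
Proof. by case: reprQ => _; apply. Qed.

Lemma ip_diag_repr f f' : S f f' ->
  ip f' f = (c * sqnorm ip f + sqnorm ipW (Q f))%:C.
Proof.
move=> Sf; rewrite (Q_repr Sf); last by exists f'.
by rewrite (ip_sqnorm hilbertV) (ip_sqnorm hilbertW) -rmorphM -rmorphD.
Qed.

Lemma ip_shift_repr f f' : S f f' -> ip (f' - c%:C *: f) f = (sqnorm ipW (Q f))%:C.
Proof.
move=> Sf; rewrite (ipBl hilbertV) (ipZl hilbertV) (ip_diag_repr Sf).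
by rewrite (ip_sqnorm hilbertV) -rmorphM -rmorphB addrAC subrr add0r.
Qed.

Definition graphQbar (x : V) (w : W) : Prop :=
  exists u : nat -> V, [/\ forall n, rdom S (u n), converges ip u x &
                           converges ipW (fun n => Q (u n)) w].

Lemma graphQbar_dom x : rdom S x -> graphQbar x (Q x).
Proof.
by move=> dx; exists (fun=> x); split => //; apply: converges_cst.
Qed.

Lemma graphQbar_comb a x y w z : graphQbar x w -> graphQbar y z ->
  graphQbar (a *: x + y) (a *: w + z).
Proof.
move=> [u [du cu qu]] [v [dv cv qv]]; exists (fun n => a *: u n + v n); split.
- by move=> n; apply: rdom_comb.
- exact: converges_comb.
- by under eq_fun do rewrite Q_comb //; apply: converges_comb.
Qed.

(* [Q] is closable: if [x_n -> 0] in [dom S] and [Q x_n -> w], then [w] is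
   orthogonal to [ran Q] because [(Q g, Q x_n) = (g' - c g, x_n) -> 0]. *)
Lemma graphQbar_functional x w1 w2 : graphQbar x w1 -> graphQbar x w2 -> w1 = w2.
Proof.
move=> [u [du cu qu]] [v [dv cv qv]]; set w := w1 - w2.
pose d n := u n - v n.
have dd n : rdom S (d n) by apply: rdom_sub.
have cd : converges ip d 0 by rewrite -(subrr x); apply: converges_sub.
have qd : converges ipW (fun n => Q (d n)) w.
  by under eq_fun do rewrite Q_sub //; apply: converges_sub.
have orth g : rdom S g -> ipW w (Q g) = 0.
  move=> [g' Sg]; apply: cconverges_unique (cconverges_ipl hilbertW (Q g) qd) _.
  have -> : (fun n => ipW (Q (d n)) (Q g)) =
            (fun n => (ip g' (d n) + (- c%:C) * ip g (d n))^*).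
    apply: funext => n; rewrite (Q_repr Sg (dd n)) mulNr addrAC subrr add0r.
    by rewrite (ipJ hilbertW).
  have -> : 0 = (ip g' 0 + (- c%:C) * ip g 0)^*.
    by rewrite !(ip0r hilbertV) mulr0 addr0 conjc0.
  by apply/cconvergesJ/cconvergesD; apply: cconverges_ipr.
have : cconverges (fun n => ipW w (Q (d n))) 0.
  by under eq_fun do rewrite orth //; apply: cconverges_cst.
move/(cconverges_unique (cconverges_ipr hilbertW w qd)).
by case: hilbertW => _ _ _ definite _ /definite /eqP; rewrite subr_eq0 => /eqP.
Qed.

Lemma graphQbar_closed (x : nat -> V) (w : nat -> W) x0 w0 :
  (forall k, graphQbar (x k) (w k)) -> converges ip x x0 -> converges ipW w w0 ->
  graphQbar x0 w0.
Proof.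
move=> gxw cx cw.
have approx k : exists y, [/\ rdom S y, sqnorm ip (y - x k) < k.+1%:R^-1 &
                              sqnorm ipW (Q y - w k) < k.+1%:R^-1].
  have [u [du cu qu]] := gxw k; have kp : 0 < (k.+1%:R : R)^-1 by rewrite invr_gt0.
  have [n [h1 h2]] := filter_ex (filterI (cu _ kp) (qu _ kp)).
  by exists (u n).
have [y hy] := choice approx.
exists y; split=> [k|e e0|e e0]; first by case: (hy k).
  have e4 : 0 < e / 4 by lra.
  apply: filterS2 (near_infty_natSinv_lt (PosNum e4)) (cx _ e4) => k /= k1 k2.
  have [_ /lt_trans/(_ k1) k3 _] := hy k.
  by have := sqnorm_split hilbertV (y k) x0 (x k); lra.
have e4 : 0 < e / 4 by lra.
apply: filterS2 (near_infty_natSinv_lt (PosNum e4)) (cw _ e4) => k /= k1 k2.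
have [_ _ /lt_trans/(_ k1) k3] := hy k.
by have := sqnorm_split hilbertW (Q (y k)) w0 (w k); lra.
Qed.

Definition dom_Qbar (x : V) : Prop := exists w, graphQbar x w.

Definition Qbar (x : V) : W :=
  if pselect (dom_Qbar x) is left p then projT1 (cid p) else 0.

Lemma Qbar_eq x w : graphQbar x w -> Qbar x = w.
Proof.
move=> gxw; rewrite /Qbar; case: pselect => [p|np]; last by case: np; exists w.
by case: (cid p) => w' gxw' /=; apply: graphQbar_functional gxw' gxw.
Qed.

Lemma graphQbar_Qbar x : dom_Qbar x -> graphQbar x (Qbar x).
Proof. by case=> w gxw; rewrite (Qbar_eq gxw). Qed.

Lemma dom_Qbar_comb a x y : dom_Qbar x -> dom_Qbar y -> dom_Qbar (a *: x + y).
Proof.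
by move=> /graphQbar_Qbar gx /graphQbar_Qbar gy; eexists; apply: graphQbar_comb gx gy.
Qed.

Lemma Qbar_comb a x y : dom_Qbar x -> dom_Qbar y ->
  Qbar (a *: x + y) = a *: Qbar x + Qbar y.
Proof. by move=> /graphQbar_Qbar gx /graphQbar_Qbar gy; apply/Qbar_eq/graphQbar_comb. Qed.

Lemma Qbar_sub x y : dom_Qbar x -> dom_Qbar y -> Qbar (x - y) = Qbar x - Qbar y.
Proof. by move=> dx dy; have := Qbar_comb (-1) dy dx; rewrite !scaleN1r !(addrC (- _)). Qed.

Definition tQ (x y : V) : C := c%:C * ip x y + ipW (Qbar x) (Qbar y).

Lemma tQ_diag x : tQ x x = (c * sqnorm ip x + sqnorm ipW (Qbar x))%:C.
Proof. by rewrite /tQ (ip_sqnorm hilbertV) (ip_sqnorm hilbertW) -rmorphM -rmorphD. Qed.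

Lemma tQ_sesq : sesq_form dom_Qbar tQ.
Proof.
split.
- split=> [|a x y]; last exact: dom_Qbar_comb.
  by exists (Q 0); apply: graphQbar_dom rdom0.
- move=> a x y z dx dy _; rewrite /tQ (Qbar_comb a dx dy).
  by rewrite (ipDl hilbertV) (ipZl hilbertV) (ipDl hilbertW) (ipZl hilbertW); ring.
- move=> a x y z dx dy _; rewrite /tQ (Qbar_comb a dx dy).
  by rewrite (ipDr hilbertV) (ipZr hilbertV) (ipDr hilbertW) (ipZr hilbertW); ring.
Qed.

Lemma tQ_semibounded : semibounded_form ip dom_Qbar tQ.
Proof.
exists c => x _; rewrite tQ_diag (sqr_hnorm hilbertV) lecR lerDl.
exact: sqnorm_ge0.
Qed.

Lemma tQ_closed : closed_form ip dom_Qbar tQ.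
Proof.
move=> u x du /hconvergesE cu tQ_cauchy.
have cauchyQ : cauchy_seq ipW (fun n => Qbar (u n)).
  move=> e e0; have e2 : 0 < e / 2 by lra.
  have ec : 0 < e / 2 / (`|c| + 1) by rewrite divr_gt0 // ltr_wpDl.
  apply: eventually_pairsS (eventually_pairsI (tQ_cauchy _ e2)
           (converges_cauchy_seq hilbertV cu ec)) => n m [k1 k2].
  rewrite tQ_diag cmod_real (Qbar_sub (du n) (du m)) in k1.
  exact: lt_of_normr_normr_affine_lt (sqnorm_ge0 _ _) (sqnorm_ge0 _ _) k1 k2.
have [w cw] := cauchy_seq_converges hilbertW cauchyQ.
have gx : graphQbar x w by apply: graphQbar_closed cu cw => k; apply: graphQbar_Qbar.
have dx : dom_Qbar x by exists w.
split=> //; apply/cvgr0Pnorm_lt => e e0.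
have e2 : 0 < e / 2 by lra.
have ec : 0 < e / 2 / (`|c| + 1) by rewrite divr_gt0 // ltr_wpDl.
apply: filterS2 (cu _ ec) (cw _ e2) => n k1 k2.
rewrite tQ_diag cmod_real normr_id (Qbar_sub (du n) dx) (Qbar_eq gx).
exact: normr_affine_lt (sqnorm_ge0 _ _) (sqnorm_ge0 _ _) k1 k2.
Qed.

Lemma tQ_extends : extends_tS ip S dom_Qbar tQ.
Proof.
split=> [x dx|f f' g Sf dg]; first by exists (Q x); apply: graphQbar_dom.
have df : rdom S f by exists f'.
by rewrite /tQ (Qbar_eq (graphQbar_dom df)) (Qbar_eq (graphQbar_dom dg)) (Q_repr Sf dg).
Qed.

Lemma repr_form_cauchy (u u' : nat -> V) x w : (forall n, S (u n) (u' n)) ->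
  converges ip u x -> converges ipW (fun n => Q (u n)) w ->
  forall e : R, 0 < e ->
    eventually_pairs (fun n m => cmod (ip (u' n - u' m) (u n - u m)) < e).
Proof.
move=> Su cu qu e e0; have e2 : 0 < e / 2 by lra.
have ec : 0 < e / 2 / (`|c| + 1) by rewrite divr_gt0 // ltr_wpDl.
apply: eventually_pairsS (eventually_pairsI (converges_cauchy_seq hilbertV cu ec)
         (converges_cauchy_seq hilbertW qu e2)) => n m [k1 k2].
have dn : rdom S (u n) by exists (u' n).
have dm : rdom S (u m) by exists (u' m).
rewrite (ip_diag_repr (S_sub (Su n) (Su m))) cmod_real (Q_sub dn dm).
exact: normr_affine_lt (sqnorm_ge0 _ _) (sqnorm_ge0 _ _) k1 k2.
Qed.

Section Closure.
Variables (Db : V -> Prop) (tb : V -> V -> C).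
Hypothesis closure_tb : is_closure_tS ip S Db tb.

Lemma closure_ext_tQ : form_ext Db tb dom_Qbar tQ.
Proof.
case: closure_tb => _ _ _ _; apply.
- exact: tQ_sesq.
- exact: tQ_semibounded.
- exact: tQ_closed.
- exact: tQ_extends.
Qed.

Lemma closure_dom_lim (u u' : nat -> V) x : (forall n, S (u n) (u' n)) ->
  hconverges ip u x ->
  (forall e : R, 0 < e ->
     eventually_pairs (fun n m => cmod (ip (u' n - u' m) (u n - u m)) < e)) ->
  Db x.
Proof.
move=> Su cu tb_cauchy; case: closure_tb => _ _ tb_closed [domS tb_ext] _.
have Du n : Db (u n) by apply: domS; exists (u' n).
have [] // := tb_closed u x Du cu => e /tb_cauchy.
apply: eventually_pairsS => n m; rewrite (tb_ext _ _ _ (S_sub (Su n) (Su m))) //.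
by apply: rdom_sub; [exists (u' n)|exists (u' m)].
Qed.

Lemma closure_domP phi : Db phi <->
  exists (u u' : nat -> V), [/\ (forall n, S (u n) (u' n)), hconverges ip u phi &
    forall e : R, 0 < e -> exists N : nat, forall n m : nat,
      (N <= n)%N -> (N <= m)%N -> cmod (ip (u' n - u' m) (u n - u m)) < e].
Proof.
split=> [Dphi|[u [u' [Su cu tb_cauchy]]]]; last exact: closure_dom_lim Su cu tb_cauchy.
have [u [du cu qu]] := graphQbar_Qbar (closure_ext_tQ.1 _ Dphi).
have [u' Su] := choice du.
by exists u, u'; split=> //; [apply/hconvergesE|apply: repr_form_cauchy Su cu qu].
Qed.

Lemma closure_kerP phi : (Db phi /\ tb phi phi = (c * hnorm ip phi ^+ 2)%:C) <->
  exists (u u' : nat -> V), [/\ (forall n, S (u n) (u' n)), hconverges ip u phi &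
    (fun n => cmod (ip (u' n - c%:C *: u n) (u n))) @ \oo --> (0 : R)].
Proof.
have [domQ tb_tQ] := closure_ext_tQ.
have cmod_shift (u u' : nat -> V) n : S (u n) (u' n) ->
    cmod (ip (u' n - c%:C *: u n) (u n)) = sqnorm ipW (Q (u n) - 0).
  by move=> Su; rewrite ip_shift_repr // cmod_real subr0 ger0_norm // sqnorm_ge0.
split=> [[Dphi]|[u [u' [Su cu ker]]]].
  rewrite tb_tQ // tQ_diag (sqr_hnorm hilbertV) => /complexI /eqP.
  rewrite -subr_eq0 addrAC subrr add0r => /eqP /(sqnorm_eq0 hilbertW) Qphi0.
  have [u [du cu qu]] := graphQbar_Qbar (domQ _ Dphi); rewrite Qphi0 in qu.
  have [u' Su] := choice du; exists u, u'; split=> //; first exact/hconvergesE.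
  apply/cvgr0Pnorm_lt => e /qu; apply: filterS => n.
  by rewrite cmod_shift // ger0_norm // sqnorm_ge0.
have qu : converges ipW (fun n => Q (u n)) 0.
  move=> e /((cvgr0Pnorm_lt _).1 ker); apply: filterS => n.
  by rewrite cmod_shift // ger0_norm // sqnorm_ge0.
have /hconvergesE cu' := cu.
have Dphi : Db phi by apply: closure_dom_lim Su cu (repr_form_cauchy Su cu' qu).
have gphi : graphQbar phi 0 by exists u; split=> // n; exists (u' n).
split=> //; rewrite tb_tQ // tQ_diag (sqr_hnorm hilbertV) (Qbar_eq gphi).
by rewrite (sqnorm0 hilbertW) addr0.
Qed.
End Closure.

Lemma ran_adj_bound phi : in_ran_adj ip ipW (rdom S) Q phi ->
  exists Cphi : R, forall psi psi' : V, S psi psi' ->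
    `|ip psi phi| ^+ 2 <= Cphi%:C * ip (psi' - c%:C *: psi) psi.
Proof.
move=> [h adj]; exists (sqnorm ipW h) => psi psi' Spsi.
have dpsi : rdom S psi by exists psi'.
rewrite -add_Re2_Im2 -/(normc2 _) (ip_shift_repr Spsi) -rmorphM lecR.
rewrite -(ipJ hilbertV) normc2J adj //.
exact: normc2_ip_le.
Qed.

Section RanAdjoint.
Variables (phi : V) (Cphi : R).
Hypothesis bound_phi : forall psi psi' : V, S psi psi' ->
  `|ip psi phi| ^+ 2 <= Cphi%:C * ip (psi' - c%:C *: psi) psi.

(* When [phi = Q^* h], [energy f = |Q f - h|^2 - |h|^2]. *)
Definition energy (f : V) : R := sqnorm ipW (Q f) - 2 * Re (ip f phi).

Lemma energy_ge f : rdom S f -> - `|Cphi| <= energy f.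
Proof.
move=> [f' Sf]; have := bound_phi Sf.
rewrite -add_Re2_Im2 (ip_shift_repr Sf) -rmorphM lecR /energy.
have := sqr_Re_le_normc2 (ip f phi); rewrite /normc2.
have := sqnorm_ge0 hilbertW (Q f); have C0 := normr_ge0 Cphi.
move: (Re (ip f phi)) (sqnorm ipW (Q f)) => x q q0 hx hC.
have {hx hC} hx : x ^+ 2 <= `|Cphi| * q.
  by apply: le_trans hx (le_trans hC _); rewrite ler_wpM2r // ler_norm.
rewrite leNgt; apply/negP => lt.
have : (q + `|Cphi|) ^+ 2 < (2 * x) ^+ 2 by rewrite ltr_pXn2r // ?nnegrE; lra.
by have := sqr_ge0 (q - `|Cphi|); nra.
Qed.

Lemma energy_comb t g f : rdom S g -> rdom S f ->
  energy (t *: g + f) = energy f + normc2 t * sqnorm ipW (Q g)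
                        + 2 * Re (t * (ipW (Q g) (Q f) - ip g phi)).
Proof.
move=> dg df; rewrite /energy (Q_comb t dg df) (sqnormD hilbertW) (sqnormZ hilbertW).
rewrite (ipZl hilbertW) (ipDl hilbertV) (ipZl hilbertV).
move: (ipW (Q g) (Q f)) (ip g phi) (ip f phi) t => a b z t.
by case: a => ? ?; case: b => ? ?; case: z => ? ?; case: t => ? ? /=; ring.
Qed.

Lemma sqnormQ_sub_le_energy d f g : (forall x, rdom S x -> d <= energy x) ->
  rdom S f -> rdom S g ->
  sqnorm ipW (Q f - Q g) <= 2 * energy f + 2 * energy g - 4 * d.
Proof.
move=> dle df dg; have := Q_comb 1 df dg; rewrite !scale1r => Qfg.
have dfg : rdom S (f + g) by have := rdom_comb 1 df dg; rewrite scale1r.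
have := dle _ (rdom_comb (2^-1 : R)%:C dfg rdom0).
rewrite /energy (Q_comb _ dfg rdom0) Q0 !addr0 (sqnormZ hilbertW) (ipZl hilbertV).
rewrite Qfg (ipDl hilbertV) Re_realM ReD (sqnormB hilbertW) (sqnormD hilbertW).
have -> : normc2 (2^-1 : R)%:C = 4^-1 by rewrite /normc2 /= expr0n /= addr0; field.
lra.
Qed.

Lemma energy_variation_ge0 (t : C) d (F : nat -> V) h g :
  (forall f, rdom S f -> d <= energy f) -> (forall k, rdom S (F k)) ->
  (forall k, energy (F k) < d + k.+1%:R^-1) ->
  converges ipW (fun k => Q (F k)) h -> rdom S g ->
  0 <= normc2 t * sqnorm ipW (Q g) + 2 * Re (t * (ipW (Q g) h - ip g phi)).
Proof.
move=> dle dF Fmin ch dg; apply/ler_addgt0Pr => e e0.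
have e4 : 0 < e / 4 by lra.
have e4t : 0 < (e / 4) ^+ 2 / (normc2 t + 1).
  by rewrite divr_gt0 ?exprn_gt0 //; have := normc2_ge0 t; lra.
have [k [/= k1 k2]] := filter_ex (filterI (near_infty_natSinv_lt (PosNum e4))
                                    (cconverges_ipr hilbertW (Q g) ch e4t)).
rewrite -normc2N opprB in k2; have := Re_mul_gtN e4 k2.
have Fk : energy (F k) < d + e / 4 by apply: lt_trans (Fmin k) _; rewrite ltrD2l.
have := dle _ (rdom_comb t dg (dF k)); rewrite energy_comb //.
move: Fk (ipW (Q g) (Q (F k))) (ipW (Q g) h) (ip g phi) => Fk a b z.
have -> : t * (a - z) = t * (b - z) - t * (b - a) by ring.
by rewrite ReB; lra.
Qed.

Lemma in_ran_adj_of_bound : in_ran_adj ip ipW (rdom S) Q phi.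
Proof.
have [d [F [dle dF Fmin]]] := minimizing_seq (ex_intro _ 0 rdom0) energy_ge.
have cauchyQF : cauchy_seq ipW (fun k => Q (F k)).
  move=> e e0; have e4 : 0 < e / 4 by lra.
  apply: eventually_pairsS (near_pairs (near_infty_natSinv_lt (PosNum e4))).
  move=> n m [/= kn km]; have := sqnormQ_sub_le_energy dle (dF n) (dF m).
  have Fn : energy (F n) < d + e / 4 by apply: lt_trans (Fmin n) _; rewrite ltrD2l.
  have Fm : energy (F m) < d + e / 4 by apply: lt_trans (Fmin m) _; rewrite ltrD2l.
  lra.
have [h ch] := cauchy_seq_converges hilbertW cauchyQF.
exists h => g dg.
have /eqP := linear_term_eq0 (sqnorm_ge0 hilbertW (Q g))
               (fun t => energy_variation_ge0 t dle dF Fmin ch dg).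
by rewrite subr_eq0 => /eqP QgH; rewrite -(ipJ hilbertV g) -QgH (ipJ hilbertW).
Qed.
End RanAdjoint.
End ClosedGraph.

Unset Implicit Arguments.
Set Strict Implicit.

Theorem theorem2p5 (R : realType) (V : lmodType R[i]) (ip : V -> V -> R[i])
    (S : V -> V -> Prop) (gamma c : R)
    (Db : V -> Prop) (tb : V -> V -> R[i])
    (W : lmodType R[i]) (ipW : W -> W -> R[i]) (Q : V -> W) :
  is_hilbert ip -> linrel S -> semibounded_lb ip S gamma -> c <= gamma ->
  is_closure_tS ip S Db tb ->
  is_hilbert ipW -> representing_map ip ipW S c Q ->
  [/\
   (forall phi : V, Db phi <->
      exists (u u' : nat -> V), [/\ (forall n, S (u n) (u' n)),
        hconverges ip u phi &
        forall e : R, 0 < e -> exists N : nat, forall n m : nat,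
          (N <= n)%N -> (N <= m)%N ->
          cmod (ip (u' n - u' m) (u n - u m)) < e]),
   (forall phi : V, (Db phi /\ tb phi phi = (c * hnorm ip phi ^+ 2)%:C) <->
      exists (u u' : nat -> V), [/\ (forall n, S (u n) (u' n)),
        hconverges ip u phi &
        (fun n => cmod (ip (u' n - c%:C *: u n) (u n))) @ \oo --> (0 : R)]) &
   (forall phi : V, in_ran_adj ip ipW (rdom S) Q phi <->
      exists Cphi : R, forall psi psi' : V, S psi psi' ->
        `|ip psi phi| ^+ 2 <= Cphi%:C * ip (psi' - c%:C *: psi) psi)].
Proof.
move=> hilbertV linS _ _ closure_tb hilbertW reprQ; split=> phi.
- exact: (closure_domP hilbertV hilbertW linS reprQ closure_tb).
- exact: (closure_kerP hilbertV hilbertW linS reprQ closure_tb).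
- split; first exact: (ran_adj_bound hilbertV hilbertW reprQ).
  by case=> Cphi /(in_ran_adj_of_bound hilbertV hilbertW linS reprQ).
Qed.
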